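(* Let $\mathbf P=(P,\leq,{}',0,1)$ be an orthogonal lub-complete poset. Then the following conditions are equivalent: (i) $\mathbf P$ is a paraorthomodular poset. (ii) For all $x,y\in P$, $x\rightarrow_K y=1$ implies $x\leq y$. (iii) For all $x,y\in P$, $x\rightarrow_N y=1$ implies $x\leq y$.
   Context: $(P,\leq,{}',0,1)$ is a bounded poset with an antitone involution ${}'$; orthogonal means $x\leq y'$ implies $x\vee y$ exists; lub-complete means for every lower bound $x$ of a finite subset $M$ there is a maximal lower bound of $M$ above $x$; paraorthomodular means $x\leq y$ and $x'\wedge y=0$ together imply $x=y$. For $A\subseteq P$, $L(A)$, $U(A)$ are the lower and upper cones, $\mathrm{Max}\,A$, $\mathrm{Min}\,A$ the sets of maximal and minimal elements; joins/meets with sets are elementwise. Kalmbach implication: $x\rightarrow_K y:=\mathrm{Max}\,L(x',y)\vee \mathrm{Max}\,L(x',y')\vee (x\wedge \mathrm{Min}\,U(x',y))$; non-tolens implication: $x\rightarrow_N y:=y'\rightarrow_K x'$. ''$=1$'' means equal to $\{1\}$. *)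

From Stdlib Require Import List.
Set Implicit Arguments.

Record BPosetInv (T : Type) := {
  le : T -> T -> Prop;
  cmp : T -> T;
  bot : T;
  top : T;
  le_refl : forall x, le x x;
  le_antisym : forall x y, le x y -> le y x -> x = y;
  le_trans : forall x y z, le x y -> le y z -> le x z;
  bot_le : forall x, le bot x;
  le_top : forall x, le x top;
  cmp_invol : forall x, cmp (cmp x) = x;
  cmp_antitone : forall x y, le x y -> le (cmp y) (cmp x)
}.

Section Defs.
Variables (T : Type) (P : BPosetInv T).
Local Notation "x <= y" := (le P x y).
Local Notation "x '^'' " := (cmp P x) (at level 2).

Definition tset := T -> Prop.

Definition is_join (x y z : T) : Prop :=
  x <= z /\ y <= z /\ forall w, x <= w -> y <= w -> z <= w.
Definition is_meet (x y z : T) : Prop :=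
  z <= x /\ z <= y /\ forall w, w <= x -> w <= y -> w <= z.

Definition Lc (x y : T) : tset := fun z => z <= x /\ z <= y.
Definition Uc (x y : T) : tset := fun z => x <= z /\ y <= z.

Definition Maxs (A : tset) : tset :=
  fun z => A z /\ forall w, A w -> z <= w -> w = z.
Definition Mins (A : tset) : tset :=
  fun z => A z /\ forall w, A w -> w <= z -> w = z.

Definition setJoin (A B : tset) : tset :=
  fun z => exists a b, A a /\ B b /\ is_join a b z.
Definition setMeet (A B : tset) : tset :=
  fun z => exists a b, A a /\ B b /\ is_meet a b z.
Definition single (x : T) : tset := fun z => z = x.

Definition implK (x y : T) : tset :=
  setJoin (setJoin (Maxs (Lc (x^') y)) (Maxs (Lc (x^') (y^'))))
          (setMeet (single x) (Mins (Uc (x^') y))).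
Definition implN (x y : T) : tset := implK (y^') (x^').

(* "S = 1" : S equals the singleton {1} *)
Definition is_one (S : tset) : Prop := forall z, S z <-> z = top P.

Definition orthogonal : Prop :=
  forall x y, x <= y^' -> exists z, is_join x y z.

Definition lowerb (M : list T) : tset := fun z => forall m, In m M -> z <= m.
Definition lub_complete : Prop :=
  forall (M : list T) x, lowerb M x ->
    exists z, Maxs (lowerb M) z /\ x <= z.

Definition paraorthomodular : Prop :=
  forall x y, x <= y -> is_meet (x^') y (bot P) -> x = y.
End Defs.

(** Under paraorthomodularity, [x ->K y = 1] forces the three pieces of the
    Kalmbach implication to collapse: for maximal lower bounds [u] of [{x', y}],
    [v] of [{x', y'}] and a minimal upper bound [w] of [{x', y}], the element
    [(u \/ v) \/ (x /\ w)] is [1]; a join [p \/ q = 1] with [p <= x'] and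
    [q <= x] gives [p = x'] and [q = x] by paraorthomodularity.  Hence
    [x /\ y' = 0], and then [v = y'] by paraorthomodularity again, so
    [y' <= x'].  Conversely, if [x <= y] and [x' /\ y = 0], then [y ->K x]
    evaluates to [y' \/ y = 1], so (ii) yields [y <= x].  Finally
    [x ->N y = y' ->K x'], and [y' <= x'] iff [x <= y]. *)

From Stdlib Require Import List.
Import ListNotations.

Section AntitoneInvolution.
Context {T : Type} {P : BPosetInv T}.
Local Notation "x <= y" := (le P x y).
Local Notation "x '^''" := (cmp P x) (at level 2).

Lemma cmp_le_cmp x y : x^' <= y^' <-> y <= x.
Proof.
  split; intro H; [|now apply cmp_antitone].
  apply cmp_antitone in H. now rewrite !cmp_invol in H.
Qed.

Lemma le_cmp_sym x y : x <= y^' -> y <= x^'.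
Proof. intro H. apply cmp_antitone in H. now rewrite cmp_invol in H. Qed.

Lemma cmp_top : (top P)^' = bot P.
Proof.
  apply (le_antisym P); [|apply bot_le].
  rewrite <- (cmp_invol P (bot P)) at 1. apply cmp_antitone, le_top.
Qed.

Lemma cmp_bot : (bot P)^' = top P.
Proof. now rewrite <- cmp_top, cmp_invol. Qed.

Lemma top_le_eq x : top P <= x -> x = top P.
Proof. intro H. apply (le_antisym P); [apply le_top | exact H]. Qed.

Lemma join_unique {a b j j'} : is_join P a b j -> is_join P a b j' -> j = j'.
Proof. intros [? [? ?]] [? [? ?]]. apply (le_antisym P); auto. Qed.

Lemma meet_unique {a b m m'} : is_meet P a b m -> is_meet P a b m' -> m = m'.
Proof. intros [? [? ?]] [? [? ?]]. apply (le_antisym P); auto. Qed.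

Lemma is_join_le a b : a <= b -> is_join P a b b.
Proof. intro H. split; [exact H | split; [apply le_refl | auto]]. Qed.

Lemma is_meet_top a : is_meet P a (top P) a.
Proof. split; [apply le_refl | split; [apply le_top | auto]]. Qed.

Lemma cmp_join a b j : is_join P a b j -> is_meet P (a^') (b^') (j^').
Proof.
  intros [Ha [Hb Hj]]. split; [|split].
  - now apply cmp_antitone.
  - now apply cmp_antitone.
  - intros w Hwa Hwb. apply le_cmp_sym, Hj; now apply le_cmp_sym.
Qed.

Lemma cmp_meet a b m : is_meet P a b m -> is_join P (a^') (b^') (m^').
Proof.
  intros [Ha [Hb Hm]]. split; [|split].
  - now apply cmp_antitone.
  - now apply cmp_antitone.
  - intros w Haw Hbw. apply cmp_le_cmp. rewrite cmp_invol.
    apply Hm; apply cmp_le_cmp; now rewrite cmp_invol.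
Qed.

Lemma Maxs_Lc_cmp a b t : Maxs P (Lc P a b) t -> Mins P (Uc P (a^') (b^')) (t^').
Proof.
  intros [[Hta Htb] Hmax]. split; [split; now apply cmp_antitone|].
  intros c [Hac Hbc] Hct.
  rewrite <- (cmp_invol P c). f_equal.
  apply Hmax.
  - split; apply cmp_le_cmp; now rewrite cmp_invol.
  - now apply le_cmp_sym.
Qed.

Lemma Maxs_greatest (A : tset T) a :
  A a -> (forall z, A z -> z <= a) -> forall z, Maxs P A z <-> z = a.
Proof.
  intros Aa Ha z. split.
  - intros [Az Hz]. symmetry. now apply Hz, Ha.
  - intros ->. split; [exact Aa|]. intros w Aw Haw. apply (le_antisym P); auto.
Qed.

Lemma Mins_least (A : tset T) a :
  A a -> (forall z, A z -> a <= z) -> forall z, Mins P A z <-> z = a.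
Proof.
  intros Aa Ha z. split.
  - intros [Az Hz]. symmetry. now apply Hz, Ha.
  - intros ->. split; [exact Aa|]. intros w Aw Hwa. apply (le_antisym P); auto.
Qed.

Lemma lowerb_pair a b z : lowerb P [a; b] z <-> Lc P a b z.
Proof.
  split.
  - intro H. split; apply H; simpl; auto.
  - intros [Ha Hb] m [<- | [<- | []]]; assumption.
Qed.

Lemma Maxs_Lc_exists :
  lub_complete P -> forall a b c, Lc P a b c ->
  exists t, Maxs P (Lc P a b) t /\ c <= t.
Proof.
  intros lubP a b c Hc.
  destruct (lubP [a; b] c) as [t [[Ht Hmax] Hct]]; [now apply lowerb_pair|].
  exists t. split; [split|exact Hct].
  - now apply lowerb_pair.
  - intros w Hw. apply Hmax. now apply lowerb_pair.
Qed.

Lemma Maxs_Lc_nonempty :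
  lub_complete P -> forall a b, exists t, Maxs P (Lc P a b) t.
Proof.
  intros lubP a b.
  destruct (Maxs_Lc_exists lubP a b (bot P)) as [t [Ht _]];
    [split; apply bot_le | now exists t].
Qed.

Lemma orthogonal_meet :
  orthogonal P -> forall a b, a^' <= b -> exists m, is_meet P a b m.
Proof.
  intros orthP a b H.
  destruct (orthP (a^') (b^')) as [j Hj]; [now rewrite cmp_invol|].
  exists (j^'). apply cmp_join in Hj. now rewrite !cmp_invol in Hj.
Qed.

Lemma implK_intro x y u v w p q r :
  Maxs P (Lc P (x^') y) u -> Maxs P (Lc P (x^') (y^')) v ->
  Mins P (Uc P (x^') y) w ->
  is_join P u v p -> is_meet P x w q -> is_join P p q r -> implK P x y r.
Proof.
  intros Hu Hv Hw Hp Hq Hr.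
  exists p, q. split; [exists u, v; auto|].
  split; [exists x, w; split; [reflexivity | auto] | exact Hr].
Qed.

Lemma implK_le_iff_implN_le :
  (forall x y, is_one P (implK P x y) -> x <= y) <->
  (forall x y, is_one P (implN P x y) -> x <= y).
Proof.
  unfold implN. split; intros H x y Hxy; apply cmp_le_cmp, H; [exact Hxy|].
  now rewrite !cmp_invol.
Qed.

Section Paraorthomodular.
Hypotheses (orthP : orthogonal P) (lubP : lub_complete P)
  (pomP : paraorthomodular P).

Lemma paraorthomodular_join p q : q <= p^' -> is_join P p q (top P) -> q = p^'.
Proof.
  intros Hqp [Hp [Hq Hj]]. apply pomP; [exact Hqp|].
  rewrite <- cmp_top. apply cmp_join. repeat split; auto.
Qed.

Lemma eq_of_join_top {x p q} :
  p <= x^' -> q <= x -> is_join P p q (top P) -> p = x^' /\ q = x.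
Proof.
  intros Hp Hq Hj.
  assert (Hqp : q = p^') by (apply paraorthomodular_join;
    [apply (le_trans P) with x; [|apply le_cmp_sym]|]; assumption).
  assert (Hqx : q = x).
  { apply (le_antisym P); [exact Hq|]. rewrite Hqp. now apply le_cmp_sym. }
  split; [|exact Hqx].
  now rewrite <- Hqx, Hqp, cmp_invol.
Qed.

Lemma implK_one_spec {x y u v w} :
  is_one P (implK P x y) ->
  Maxs P (Lc P (x^') y) u -> Maxs P (Lc P (x^') (y^')) v ->
  Mins P (Uc P (x^') y) w ->
  is_join P u v (x^') /\ x <= w /\ is_join P (x^') x (top P).
Proof.
  intros one Hu Hv Hw.
  destruct (orthP u v) as [p Hp].
  { apply (le_trans P) with y; [apply Hu | apply le_cmp_sym, Hv]. }
  destruct (orthogonal_meet orthP x w (proj1 (proj1 Hw))) as [q Hq].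
  assert (Hpx : p <= x^') by (apply Hp; [apply Hu | apply Hv]).
  destruct (orthP p q) as [r Hr].
  { apply (le_trans P) with (x^'); [exact Hpx|]. apply cmp_antitone, Hq. }
  assert (Hr1 : r = top P) by (apply one; now apply implK_intro with u v w p q).
  subst r. destruct (eq_of_join_top Hpx (proj1 Hq) Hr) as [-> ->].
  split; [exact Hp | split; [apply Hq | exact Hr]].
Qed.

Lemma implK_one_meet_bot {x y} :
  is_one P (implK P x y) -> forall z, z <= x -> z <= y^' -> z <= bot P.
Proof.
  intros one z Hzx Hzy.
  destruct (Maxs_Lc_nonempty lubP (x^') y) as [u Hu].
  destruct (Maxs_Lc_nonempty lubP (x^') (y^')) as [v Hv].
  destruct (Maxs_Lc_exists lubP x (y^') z) as [t [Ht Hzt]]; [split; assumption|].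
  assert (Hw : Mins P (Uc P (x^') y) (t^'))
    by (apply Maxs_Lc_cmp in Ht; now rewrite cmp_invol in Ht).
  destruct (implK_one_spec one Hu Hv Hw) as [_ [Hxt Hjoin]].
  assert (Ht1 : t^' = top P) by (apply top_le_eq, Hjoin; [apply Hw | exact Hxt]).
  rewrite <- (cmp_invol P t), Ht1, cmp_top in Hzt. exact Hzt.
Qed.

Lemma implK_one_le x y : is_one P (implK P x y) -> x <= y.
Proof.
  intro one.
  destruct (Maxs_Lc_nonempty lubP (x^') y) as [u Hu].
  destruct (Maxs_Lc_nonempty lubP (x^') (y^')) as [v Hv].
  destruct (Maxs_Lc_nonempty lubP x (y^')) as [t Ht].
  assert (Hw : Mins P (Uc P (x^') y) (t^'))
    by (apply Maxs_Lc_cmp in Ht; now rewrite cmp_invol in Ht).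
  destruct (implK_one_spec one Hu Hv Hw) as [Huv _].
  assert (Hvy : v = y^').
  { apply pomP; [apply Hv|]. split; [apply bot_le | split; [apply bot_le|]].
    intros z Hzv Hzy. apply (implK_one_meet_bot one); [|exact Hzy].
    apply cmp_le_cmp, Huv; [|now apply le_cmp_sym].
    apply (le_trans P) with y; [apply Hu | now apply le_cmp_sym]. }
  apply cmp_le_cmp. rewrite <- Hvy. apply Hv.
Qed.

End Paraorthomodular.

Lemma implK_one_of_meet_bot :
  lub_complete P -> forall x y, x <= y -> is_meet P (x^') y (bot P) ->
  is_one P (implK P y x).
Proof.
  intros lubP x y Hxy Hmeet.
  assert (Hjoin : is_join P x (y^') (top P)).
  { apply cmp_meet in Hmeet. now rewrite cmp_invol, cmp_bot in Hmeet. }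
  assert (Hy'y : is_join P (y^') y (top P)).
  { repeat split; try apply le_top.
    intros w Hyw Hw. apply Hjoin; [apply (le_trans P) with y|]; assumption. }
  assert (Hmax : forall n, Maxs P (Lc P (y^') (x^')) n <-> n = y^').
  { apply Maxs_greatest; [split; [apply le_refl | now apply cmp_antitone]|].
    intros n Hn. apply Hn. }
  assert (Hmin : forall d, Mins P (Uc P (y^') x) d <-> d = top P).
  { apply Mins_least; [split; apply le_top|].
    intros d [Hyd Hxd]. now apply Hjoin. }
  intro z. split.
  - intros [a [b [[m [n [Hm [Hn Ha]]]] [[c [d [-> [Hd Hb]]]] Hz]]]].
    apply Hmax in Hn. apply Hmin in Hd. subst n d.
    assert (Hay : a = y^') by (apply (join_unique Ha), is_join_le, Hm).
    assert (Hby : b = y) by (apply (meet_unique Hb), is_meet_top).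
    subst a b. exact (join_unique Hz Hy'y).
  - intros ->.
    destruct (Maxs_Lc_nonempty lubP (y^') x) as [m Hm].
    apply implK_intro with m (y^') (top P) (y^') y.
    + exact Hm.
    + now apply Hmax.
    + now apply Hmin.
    + apply is_join_le, Hm.
    + apply is_meet_top.
    + exact Hy'y.
Qed.

Lemma paraorthomodular_of_implK_one :
  lub_complete P -> (forall x y, is_one P (implK P x y) -> x <= y) ->
  paraorthomodular P.
Proof.
  intros lubP H x y Hxy Hmeet.
  apply (le_antisym P); [exact Hxy|].
  apply H. now apply implK_one_of_meet_bot.
Qed.

End AntitoneInvolution.

Theorem theorem5 (T : Type) (P : BPosetInv T) :
  orthogonal P -> lub_complete P ->
  (paraorthomodular P <->
     (forall x y, is_one P (implK P x y) -> le P x y)) /\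
  (paraorthomodular P <->
     (forall x y, is_one P (implN P x y) -> le P x y)).
Proof.
  intros orthP lubP.
  assert (K : paraorthomodular P <->
                (forall x y, is_one P (implK P x y) -> le P x y)).
  { split.
    - exact (implK_one_le orthP lubP).
    - exact (paraorthomodular_of_implK_one lubP). }
  split; [exact K|].
  rewrite K. apply implK_le_iff_implN_le.
Qed.
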